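(* Let $(V,(\cdot\,,\cdot)_V)$ be an admissible integral $\mathrm{Cl}_{n,0}$-module (with positive definite inner product $(\cdot\,,\cdot)_V$) and $(U,\langle\cdot\,,\cdot\rangle_U)$ an admissible integral $\mathrm{Cl}_{0,2}$-module. Then the scalar product space $V\otimes U$ with scalar product $\langle v\otimes u,v'\otimes u'\rangle=(v,v')_V\langle u,u'\rangle_U$ is (carries the structure of) an admissible integral $\mathrm{Cl}_{0,n+2}$-module.
   Context: A scalar product is a real symmetric non-degenerate bilinear form. $\mathrm{Cl}_{p,q}$ is the real Clifford algebra generated by $\mathbb R^{p,q}$ ($\mathbb R^{p+q}$ with quadratic form $x_1^2+\dots+x_p^2-x_{p+1}^2-\dots-x_{p+q}^2$) with relation $z^2=-\langle z,z\rangle\cdot1$; orthonormal generators $z_k$ satisfy $\langle z_k,z_l\rangle=0$ ($k\neq l$), $\langle z_k,z_k\rangle=\pm1$. A $\mathrm{Cl}_{p,q}$-module $V$ with representation $J$ is admissible if it carries a scalar product with $\langle J_zu,v\rangle_V=-\langle u,J_zv\rangle_V$ for all $z,u,v$; it is an admissible integral module if it has a basis $\{v_\alpha\}$ with $\langle v_\alpha,v_\beta\rangle_V=0$ ($\alpha\neq\beta$), $\langle v_\alpha,v_\alpha\rangle_V=\pm1$, and $\langle J_{z_k}v_\alpha,v_\beta\rangle_V\in\{1,-1,0\}$ for all orthonormal generators $z_k$ and all $\alpha,\beta$. *)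

From HB Require Import structures.
From mathcomp Require Import all_boot all_order all_algebra.
From mathcomp Require Import reals.
From mathcomp.real_closed Require Export mxtens.
Set Implicit Arguments. Unset Strict Implicit. Unset Printing Implicit Defensive.
Import Order.TTheory GRing.Theory Num.Theory.
Local Open Scope ring_scope.

(* Finite-dimensional real vector spaces are represented in coordinates:
   V = R^N as column vectors 'cV[R]_N.  A bilinear form is represented by
   its Gram matrix G : <u, v> = u^T G v. *)

Section Defs.
Variable R : realType.

Definition bform {N : nat} (G : 'M[R]_N) (u v : 'cV[R]_N) : R :=
  (u^T *m G *m v) 0 0.

Definition scalar_product {N : nat} (G : 'M[R]_N) : Prop :=
  G^T = G /\ G \in unitmx.

Definition pos_definite {N : nat} (G : 'M[R]_N) : Prop :=
  forall u : 'cV[R]_N, u != 0 -> 0 < bform G u u.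

Definition qform {p q : nat} (z : 'rV[R]_(p + q)) : R :=
  \sum_(i < p + q) (if (i < p)%N then 1 else -1) * (z 0 i) ^+ 2.

Definition gen {p q : nat} (k : 'I_(p + q)) : 'rV[R]_(p + q) := delta_mx 0 k.

(* A Cl_{p,q}-module structure on R^N: by the universal property of the
   Clifford algebra, a representation is the same as a linear map
   J : R^{p,q} -> End(R^N) with J_z^2 = - <z,z> Id. *)
Definition clmodule (p q N : nat) (J : 'rV[R]_(p + q) -> 'M[R]_N) : Prop :=
  (forall (a : R) (z w : 'rV[R]_(p + q)), J (a *: z + w) = a *: J z + J w) /\
  (forall z : 'rV[R]_(p + q), J z *m J z = - (qform z) *: 1%:M).

Definition admissible (p q N : nat) (J : 'rV[R]_(p + q) -> 'M[R]_N)
  (G : 'M[R]_N) : Prop :=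
  clmodule J /\ scalar_product G /\
  forall (z : 'rV[R]_(p + q)) (u v : 'cV[R]_N),
    bform G (J z *m u) v = - bform G u (J z *m v).

Definition pm1 (x : R) : Prop := x = 1 \/ x = -1.
Definition pm10 (x : R) : Prop := x = 1 \/ x = -1 \/ x = 0.

Definition admissible_integral (p q N : nat) (J : 'rV[R]_(p + q) -> 'M[R]_N)
  (G : 'M[R]_N) : Prop :=
  admissible J G /\
  exists B : 'M[R]_N, B \in unitmx /\
    (forall a b : 'I_N, a != b -> bform G (col a B) (col b B) = 0) /\
    (forall a : 'I_N, pm1 (bform G (col a B) (col a B))) /\
    (forall (k : 'I_(p + q)) (a b : 'I_N),
        pm10 (bform G (J (gen k) *m col a B) (col b B))).

End Defs.

From mathcomp Require Import all_boot all_order all_algebra.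
From mathcomp Require Import reals.
From mathcomp.real_closed Require Import mxtens.
From mathcomp Require Import ring lra.
Set Implicit Arguments.
Unset Strict Implicit.
Unset Printing Implicit Defensive.
Import GRing.Theory Num.Theory.
Local Open Scope ring_scope.

(* The Clifford action on V (x) U is z = (x, y) |-> J^V_x (x) K + 1 (x) J^U_y,
   where K is a complex structure on U (K^2 = -1) that anticommutes with the
   Cl_{0,2}-action and is self-adjoint for <.,.>_U: the cross terms cancel, the
   square is -<z,z> for the form of R^{0,n+2}, and every J_z is skew-adjoint
   for the product form.  To find K, split U orthogonally into copies of the
   regular module Cl_{0,2}, each spanned by u, e1 u, e2 u, e1 e2 u for a vector
   u with <u,u>_U = +-1, and let K act on each copy as x |-> e1 e2 x e1.  The
   basis of U so obtained is integral for both the action and K, so its tensor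
   product with the integral basis of V is integral for V (x) U. *)

Section BilinearForm.
Variable R : realType.

Lemma col_mulmx m n p (A : 'M[R]_(m, n)) (B : 'M[R]_(n, p)) i :
  col i (A *m B) = A *m col i B.
Proof. by rewrite !colE mulmxA. Qed.

Lemma mulmx_col_entry m n p (A : 'M[R]_(m, n)) (B : 'M[R]_(n, p)) i k :
  (A *m B) i k = (A *m col k B) i 0.
Proof. by rewrite -col_mulmx [RHS]mxE. Qed.

Definition skew_adjoint n (G A : 'M[R]_n) : Prop := A^T *m G = - (G *m A).
Definition self_adjoint n (G A : 'M[R]_n) : Prop := A^T *m G = G *m A.

Lemma bform_col n m (G : 'M[R]_n) (X Y : 'M[R]_(n, m)) a b :
  bform G (col a X) (col b Y) = (X^T *m G *m Y) a b.
Proof.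
by rewrite /bform tr_col -row_mul !colE !mulmxA -colE -row_mul !mxE.
Qed.

Lemma bform_sym n (G : 'M[R]_n) u v : G^T = G -> bform G u v = bform G v u.
Proof.
move=> sG; rewrite /bform.
have -> : v^T *m G *m u = (u^T *m G *m v)^T by rewrite !trmx_mul trmxK sG mulmxA.
by rewrite [RHS]mxE.
Qed.

Lemma skew_adjointP n (G A : 'M[R]_n) :
  skew_adjoint G A <->
  forall u v, bform G (A *m u) v = - bform G u (A *m v).
Proof.
split=> [sA u v | h].
  by rewrite /bform trmx_mul -!mulmxA [A^T *m _]mulmxA sA mulNmx mulmxN mxE !mulmxA.
apply/matrixP => i j; have := h (col i 1%:M) (col j 1%:M).
by rewrite -!col_mulmx !bform_col !mulmx1 trmx1 mul1mx !mxE => ->.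
Qed.

Lemma bformDl n (G : 'M[R]_n) u v w :
  bform G (u + v) w = bform G u w + bform G v w.
Proof. by rewrite /bform linearD /= !mulmxDl mxE. Qed.

Lemma bformDr n (G : 'M[R]_n) u v w :
  bform G w (u + v) = bform G w u + bform G w v.
Proof. by rewrite /bform !mulmxDr mxE. Qed.

Lemma bformZl n (G : 'M[R]_n) (c : R) u v : bform G (c *: u) v = c * bform G u v.
Proof. by rewrite /bform linearZ /= -!scalemxAl mxE. Qed.

Lemma bformZr n (G : 'M[R]_n) (c : R) u v : bform G u (c *: v) = c * bform G u v.
Proof. by rewrite /bform -!scalemxAr mxE. Qed.

Lemma bformNr n (G : 'M[R]_n) u v : bform G u (- v) = - bform G u v.
Proof. by rewrite /bform mulmxN mxE. Qed.

Lemma bform_delta n (G : 'M[R]_n) i j :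
  bform G (delta_mx i 0) (delta_mx j 0) = G i j.
Proof. by rewrite /bform trmx_delta -rowE -colE !mxE. Qed.

Lemma bform_skew_self n (G A : 'M[R]_n) u :
  G^T = G -> skew_adjoint G A -> bform G u (A *m u) = 0.
Proof.
move=> sG /skew_adjointP sA; have := sA u u.
by rewrite bform_sym //; lra.
Qed.

Lemma skew_adjointM n (G A B : 'M[R]_n) :
  skew_adjoint G A -> skew_adjoint G B -> A *m B = - (B *m A) ->
  skew_adjoint G (A *m B).
Proof.
rewrite /skew_adjoint => sA sB AB.
by rewrite trmx_mul -mulmxA sA mulmxN (mulmxA B^T) sB mulNmx opprK -mulmxA AB mulmxN opprK.
Qed.

Lemma skew_adjoint_restrict n k (G J : 'M[R]_n) (Z : 'M[R]_(n, k)) J' :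
  skew_adjoint G J -> J *m Z = Z *m J' -> skew_adjoint (Z^T *m G *m Z) J'.
Proof.
rewrite /skew_adjoint => sJ JZ.
rewrite !mulmxA -trmx_mul -JZ trmx_mul -(mulmxA Z^T J^T) sJ mulmxN mulNmx.
by rewrite -!mulmxA JZ.
Qed.

Lemma gram_mulmx m (G A X a : 'M[R]_m) :
  A *m X = X *m a -> (A *m X)^T *m G *m X = a^T *m (X^T *m G *m X).
Proof. by move=> AX; rewrite AX trmx_mul !mulmxA. Qed.

Lemma anti_conj m (X A B a b : 'M[R]_m) : X \in unitmx ->
  A *m X = X *m a -> B *m X = X *m b -> a *m b = - (b *m a) -> A *m B = - (B *m A).
Proof.
move=> uX AX BX ab; apply: (can_inj (mulmxK uX)) => /=.
rewrite mulNmx -!mulmxA BX AX !mulmxA AX BX -!mulmxA ab.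
by rewrite mulmxN.
Qed.

Lemma sqr_conj m (X A a : 'M[R]_m) : X \in unitmx ->
  A *m X = X *m a -> a *m a = - 1%:M -> A *m A = - 1%:M.
Proof.
move=> uX AX aa; apply: (can_inj (mulmxK uX)) => /=.
by rewrite -mulmxA AX mulmxA AX -mulmxA aa mulmxN mulNmx mulmx1 mul1mx.
Qed.

Lemma self_adjoint_conj m (G X A a : 'M[R]_m) : X \in unitmx ->
  A *m X = X *m a -> self_adjoint (X^T *m G *m X) a -> self_adjoint G A.
Proof.
rewrite /self_adjoint => uX AX sa.
have uXT : X^T \in unitmx by rewrite unitmx_tr.
apply: (can_inj (mulmxK uX)); apply: (can_inj (mulKmx uXT)) => /=.
have -> : X^T *m (A^T *m G *m X) = a^T *m (X^T *m G *m X).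
  by rewrite !mulmxA -trmx_mul AX trmx_mul.
by rewrite sa -!mulmxA AX.
Qed.

End BilinearForm.

Section Signs.
Variable R : realType.

Definition pm10_mx m n (A : 'M[R]_(m, n)) : Prop := forall i j, pm10 (A i j).

Lemma pm1_pm10 (x : R) : pm1 x -> pm10 x.
Proof. by rewrite /pm1 /pm10; tauto. Qed.

Lemma pm1M (a b : R) : pm1 a -> pm1 b -> pm1 (a * b).
Proof. by rewrite /pm1 => [[]->[]->]; lra. Qed.

Lemma pm10M (a b : R) : pm10 a -> pm10 b -> pm10 (a * b).
Proof. by rewrite /pm10 => [[->|[->|->]] [->|[->|->]]]; lra. Qed.

Lemma pm10_mxZ m n (e : R) (A : 'M[R]_(m, n)) :
  pm1 e -> pm10_mx A -> pm10_mx (e *: A).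
Proof. by move=> /pm1_pm10 pe hA i j; rewrite mxE; apply: pm10M. Qed.

Lemma pm10_mx_diag n (A : 'M[R]_n) :
  is_diag_mx A -> (forall i, pm1 (A i i)) -> pm10_mx A.
Proof.
move=> /is_diag_mxP dA sA i j; have [<-|ij] := eqVneq i j; first exact/pm1_pm10.
by rewrite dA //; right; right.
Qed.

End Signs.

Section DiagBlock.
Variable R : realType.

Definition diag_block_mx m n (A : 'M[R]_m) (B : 'M[R]_n) : 'M[R]_(m + n) :=
  block_mx A 0 0 B.

Lemma mul_diag_block_mx m n (A C : 'M[R]_m) (B D : 'M[R]_n) :
  diag_block_mx A B *m diag_block_mx C D = diag_block_mx (A *m C) (B *m D).
Proof. by rewrite /diag_block_mx mulmx_block !mulmx0 !mul0mx !addr0 !add0r. Qed.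

Lemma tr_diag_block_mx m n (A : 'M[R]_m) (B : 'M[R]_n) :
  (diag_block_mx A B)^T = diag_block_mx A^T B^T.
Proof. by rewrite /diag_block_mx tr_block_mx !trmx0. Qed.

Lemma opp_diag_block_mx m n (A : 'M[R]_m) (B : 'M[R]_n) :
  - diag_block_mx A B = diag_block_mx (- A) (- B).
Proof. by rewrite /diag_block_mx opp_block_mx !oppr0. Qed.

Lemma diag_block_mx1 m n : diag_block_mx (1%:M : 'M[R]_m) (1%:M : 'M[R]_n) = 1%:M.
Proof. by rewrite /diag_block_mx -scalar_mx_block. Qed.

Lemma unitmx_diag_block_mx m n (A : 'M[R]_m) (B : 'M[R]_n) :
  (diag_block_mx A B \in unitmx) = (A \in unitmx) && (B \in unitmx).
Proof. by rewrite !unitmxE /diag_block_mx det_ublock unitrM. Qed.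

Lemma is_diag_block_diag_mx m n (A : 'M[R]_m) (B : 'M[R]_n) :
  is_diag_mx (diag_block_mx A B) = is_diag_mx A && is_diag_mx B.
Proof. by rewrite /diag_block_mx is_diag_block_mx // !eqxx. Qed.

Lemma diag_block_mx_diag (P : R -> Prop) m n (A : 'M[R]_m) (B : 'M[R]_n) :
  (forall i, P (A i i)) -> (forall i, P (B i i)) ->
  forall i, P (diag_block_mx A B i i).
Proof.
move=> hA hB i; rewrite -(splitK i).
by case: (split i) => k /=; rewrite /diag_block_mx ?block_mxEul ?block_mxEdr.
Qed.

Lemma pm10_diag_block_mx m n (A : 'M[R]_m) (B : 'M[R]_n) :
  pm10_mx A -> pm10_mx B -> pm10_mx (diag_block_mx A B).
Proof.
move=> hA hB i j; rewrite -(splitK i) -(splitK j).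
case: (split i) => k; case: (split j) => l /=;
  rewrite /diag_block_mx ?block_mxEul ?block_mxEur ?block_mxEdl ?block_mxEdr
    ?mxE //; by right; right.
Qed.

Lemma mul_row_diag_block_mx p m n (Y : 'M[R]_(p, m)) (Z : 'M[R]_(p, n)) A B :
  row_mx Y Z *m diag_block_mx A B = row_mx (Y *m A) (Z *m B).
Proof. by rewrite /diag_block_mx mul_row_block !mulmx0 addr0 add0r. Qed.

Lemma gram_row_mx m n (G : 'M[R]_(m + n)) (Y : 'M[R]_(m + n, m)) (Z : 'M[R]_(m + n, n)) :
  G^T = G -> Y^T *m G *m Z = 0 ->
  (row_mx Y Z)^T *m G *m row_mx Y Z = diag_block_mx (Y^T *m G *m Y) (Z^T *m G *m Z).
Proof.
move=> sG oYZ; rewrite tr_row_mx mul_col_mx mul_col_row oYZ /diag_block_mx.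
congr block_mx.
by rewrite -[LHS]trmxK (trmx_mul (Z^T *m G) Y) (trmx_mul Z^T G) trmxK sG mulmxA oYZ trmx0.
Qed.

End DiagBlock.

Section IntegralFrame.
Variable R : realType.

Record integral_frame m (E1 E2 K Q : 'M[R]_m) : Prop := IntegralFrame {
  frame_anti1 : K *m E1 = - (E1 *m K);
  frame_anti2 : K *m E2 = - (E2 *m K);
  frame_sqrK : K *m K = - 1%:M;
  frame_self_adjoint : self_adjoint Q K;
  frame_diag : is_diag_mx Q;
  frame_sign : forall i, pm1 (Q i i);
  frame_int1 : pm10_mx (E1^T *m Q);
  frame_int2 : pm10_mx (E2^T *m Q);
  frame_intK : pm10_mx (K^T *m Q) }.

Lemma integral_frame0 (E1 E2 K Q : 'M[R]_0) : integral_frame E1 E2 K Q.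
Proof. by split; try apply/matrixP; try apply/is_diag_mxP; move=> -[]. Qed.

Lemma integral_frame_diag_block m n (E1 E2 K Q : 'M[R]_m) (F1 F2 L P : 'M[R]_n) :
  integral_frame E1 E2 K Q -> integral_frame F1 F2 L P ->
  integral_frame (diag_block_mx E1 F1) (diag_block_mx E2 F2)
    (diag_block_mx K L) (diag_block_mx Q P).
Proof.
case=> a1 a2 kk sa dg sg i1 i2 ik; case=> b1 b2 ll sb dP sP j1 j2 jk.
split; rewrite ?tr_diag_block_mx ?mul_diag_block_mx ?opp_diag_block_mx.
- by rewrite a1 b1.
- by rewrite a2 b2.
- by rewrite kk ll -diag_block_mx1 opp_diag_block_mx.
- by rewrite /self_adjoint tr_diag_block_mx !mul_diag_block_mx sa sb.
- by rewrite is_diag_block_diag_mx dg dP.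
- exact: diag_block_mx_diag.
- exact: pm10_diag_block_mx.
- exact: pm10_diag_block_mx.
- exact: pm10_diag_block_mx.
Qed.

End IntegralFrame.

Section Model.
Variable R : realType.

(* The regular representation of Cl_{0,2} on itself in the basis
   (1, e1, e2, e1 e2): [model_e1] and [model_e2] are the left multiplications
   by e1 and e2, and [model_k] is x |-> e1 e2 x e1, which anticommutes with
   both.  [model_gram] is the Gram matrix of the form with <1, 1> = 1 for which
   e1 and e2 act skew-adjointly. *)
Definition mx4 (l : seq (seq R)) : 'M[R]_4 := \matrix_(i, j) nth 0 (nth [::] l i) j.

Definition model_e1 := mx4 [:: [:: 0; 1; 0; 0]; [:: 1; 0; 0; 0];
                               [:: 0; 0; 0; 1]; [:: 0; 0; 1; 0]].
Definition model_e2 := mx4 [:: [:: 0; 0; 1; 0]; [:: 0; 0; 0; -1];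
                               [:: 1; 0; 0; 0]; [:: 0; -1; 0; 0]].
Definition model_k := mx4 [:: [:: 0; 0; 1; 0]; [:: 0; 0; 0; -1];
                              [:: -1; 0; 0; 0]; [:: 0; 1; 0; 0]].
Definition model_gram := mx4 [:: [:: 1; 0; 0; 0]; [:: 0; -1; 0; 0];
                                 [:: 0; 0; -1; 0]; [:: 0; 0; 0; 1]].

Lemma mx4E l i j : mx4 l i j = nth 0 (nth [::] l i) j.
Proof. by rewrite mxE. Qed.

Ltac mx4_entries :=
  let i := fresh "i" in let j := fresh "j" in intros i j;
  rewrite ?mxE ?big_ord_recr ?big_ord0 /= ?mxE ?mx4E;
  case: i => [[|[|[|[|?]]]] ?] //; case: j => [[|[|[|[|?]]]] ?] //=;
  rewrite ?(mul0r, mulr0, mul1r, mulr1, add0r, addr0, mulrN, mulNr, opprK, oppr0).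

Ltac mx4_eval := apply/matrixP; mx4_entries.

Ltac mx4_pm10 := mx4_entries; rewrite /pm10; auto.

Lemma model_gram_sqr : model_gram *m model_gram = 1%:M.
Proof. by mx4_eval. Qed.

Lemma model_frame (e : R) : pm1 e ->
  integral_frame model_e1 model_e2 model_k (e *: model_gram).
Proof.
move=> pe; split; rewrite /self_adjoint -?scalemxAr -?scalemxAl.
- by mx4_eval.
- by mx4_eval.
- by mx4_eval.
- by congr (_ *: _); mx4_eval.
- by apply/is_diag_mxP; mx4_entries.
- move=> i; rewrite mxE; apply: pm1M => //.
  by case: i => [[|[|[|[|?]]]] ?] //; rewrite mx4E /pm1 /=; auto.
- by apply: pm10_mxZ => //; mx4_pm10.
- by apply: pm10_mxZ => //; mx4_pm10.
- by apply: pm10_mxZ => //; mx4_pm10.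
Qed.

Lemma unitmx_model_gramZ (e : R) : pm1 e -> e *: model_gram \in unitmx.
Proof.
move=> pe; suff : (e *: model_gram) *m (e *: model_gram) = 1%:M.
  by case/mulmx1_unit.
rewrite -scalemxAl -scalemxAr scalerA model_gram_sqr.
suff -> : e * e = 1 by rewrite scale1r.
by case: pe => ->; ring.
Qed.

End Model.
Arguments model_e1 {R}.
Arguments model_e2 {R}.
Arguments model_k {R}.
Arguments model_gram {R}.

Section Cl02Decomposition.
Variable R : realType.

Record cl02_admissible m (G J1 J2 : 'M[R]_m) : Prop := Cl02Admissible {
  cl02_sym : G^T = G;
  cl02_unit : G \in unitmx;
  cl02_sqr1 : J1 *m J1 = 1%:M;
  cl02_sqr2 : J2 *m J2 = 1%:M;
  cl02_anti : J1 *m J2 = - (J2 *m J1);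
  cl02_skew1 : skew_adjoint G J1;
  cl02_skew2 : skew_adjoint G J2 }.

Lemma exists_anisotropic m (G : 'M[R]_m) :
  (0 < m)%N -> G^T = G -> G \in unitmx -> exists u, bform G u u != 0.
Proof.
case: m G => // m G _ sG uG.
case: (pickP (fun i => G i i != 0)) => [i Gii | diag0].
  by exists (delta_mx i 0); rewrite bform_delta.
have [[i j] /= Gij | G0] := pickP (fun ij : 'I_m.+1 * 'I_m.+1 => G ij.1 ij.2 != 0).
  exists (delta_mx i 0 + delta_mx j 0).
  rewrite bformDl !bformDr !bform_delta.
  have -> : G j i = G i j by rewrite -[in RHS]sG mxE.
  move/negbFE/eqP: (diag0 i) => ->; move/negbFE/eqP: (diag0 j) => ->.
  by rewrite add0r addr0 -mulr2n mulrn_eq0 /= Gij.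
suff : G = 0 by move: uG => /[swap] ->; rewrite unitmxE det0 unitr0.
by apply/matrixP => i j; move/negbFE/eqP: (G0 (i, j)) => ->; rewrite mxE.
Qed.

Lemma exists_unit_vector m (G : 'M[R]_m) :
  (0 < m)%N -> G^T = G -> G \in unitmx -> exists u, pm1 (bform G u u).
Proof.
move=> m_gt0 sG uG; have [u uu_neq0] := exists_anisotropic m_gt0 sG uG.
set c := bform G u u in uu_neq0 *.
have c_gt0 : 0 < `|c| by rewrite normr_gt0.
set s := Num.sqrt `|c|.
have ss : s * s = `|c| by rewrite -expr2 sqr_sqrtr // ltW.
exists (s^-1 *: u); rewrite bformZl bformZr mulrA -invfM ss -/c mulrC /pm1.
case: (ltrgtP c 0) => [c_lt0|c_gt0'|c0].
- by right; rewrite ltr0_norm // invrN mulrN divff.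
- by left; rewrite gtr0_norm // divff.
- by move: uu_neq0; rewrite c0 eqxx.
Qed.

Lemma orthogonal_complement m k (G : 'M[R]_m) (Y : 'M[R]_(m, k)) :
  G^T = G -> Y^T *m G *m Y \in unitmx ->
  exists r (Z : 'M[R]_(m, r)),
    [/\ (k + r)%N = m, Y^T *m G *m Z = 0, row_free (row_mx Y Z)^T &
        forall (J : 'M[R]_m) (j : 'M[R]_k), skew_adjoint G J ->
          J *m Y = Y *m j -> exists J', J *m Z = Z *m J'].
Proof.
move=> sG uQ; set Zt := row_base (kermx (G *m Y)).
have ZtGY : Zt *m (G *m Y) = 0 by apply/sub_kermxP; rewrite eq_row_base.
have rkGY : \rank (G *m Y) = k.
  apply/eqP; rewrite eqn_leq rank_leq_col /=.
  by have := mxrankM_maxr Y^T (G *m Y); rewrite mulmxA mxrank_unit.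
exists (\rank (kermx (G *m Y))), Zt^T; split.
- by rewrite mxrank_ker rkGY subnKC // -rkGY rank_leq_row.
- have -> : Y^T *m G *m Zt^T = (Zt *m (G *m Y))^T by rewrite !trmx_mul sG.
  by rewrite ZtGY trmx0.
- rewrite tr_row_mx trmxK -kermx_eq0; apply/eqP.
  have := mulmx_ker (col_mx Y^T Zt); rewrite -[kermx (col_mx _ _)]hsubmxK mul_row_col.
  set B1 := lsubmx _; set B2 := rsubmx _ => hB.
  have B10 : B1 = 0.
    have := congr1 (mulmx^~ (G *m Y)) hB; rewrite mul0mx mulmxDl.
    rewrite -(mulmxA B2) ZtGY mulmx0 addr0 -(mulmxA B1) (mulmxA Y^T).
    move/(congr1 (mulmx^~ (invmx (Y^T *m G *m Y)))).
    by rewrite mul0mx mulmxK.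
  rewrite B10 mul0mx add0r in hB.
  by rewrite B10 (row_free_inj (row_base_free _) (etrans hB (esym (mul0mx _ _)))) row_mx0.
- move=> J j sJ JY.
  have : (Zt *m J^T <= Zt)%MS.
    rewrite (eqmxMr _ (eq_row_base _)) ?eq_row_base; apply/sub_kermxP.
    rewrite -mulmxA (mulmxA J^T) sJ mulNmx -(mulmxA G) JY (mulmxA G) mulmxN.
    by rewrite mulmxA mulmx_ker mul0mx oppr0.
  by case/submxP => P ZtJ; exists P^T; rewrite -[J]trmxK -trmx_mul ZtJ trmx_mul.
Qed.

Lemma cl02_admissible_complement k r (G J1 J2 : 'M[R]_(k + r))
    (Y : 'M[R]_(k + r, k)) (Z : 'M[R]_(k + r, r)) J1' J2' :
  cl02_admissible G J1 J2 -> Y^T *m G *m Z = 0 -> row_mx Y Z \in unitmx ->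
  J1 *m Z = Z *m J1' -> J2 *m Z = Z *m J2' ->
  cl02_admissible (Z^T *m G *m Z) J1' J2'.
Proof.
case=> sG uG sqr1 sqr2 anti sk1 sk2 oYZ uX J1Z J2Z.
have cancelZ (A B : 'M[R]_r) : Z *m A = Z *m B -> A = B.
  have -> : Z = row_mx Y Z *m col_mx 0 1%:M by rewrite mul_row_col mulmx0 add0r mulmx1.
  rewrite -!mulmxA => /(congr1 (mulmx (invmx (row_mx Y Z)))).
  by rewrite !mulKmx // !mul_col_mx !mul0mx !mul1mx => /eq_col_mx[].
split.
- by rewrite !trmx_mul trmxK sG mulmxA.
- have : (row_mx Y Z)^T *m G *m row_mx Y Z \in unitmx.
    by rewrite !unitmx_mul unitmx_tr uX uG.
  by rewrite gram_row_mx // unitmx_diag_block_mx => /andP[].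
- by apply: cancelZ; rewrite mulmxA -J1Z -mulmxA -J1Z mulmxA sqr1 mul1mx mulmx1.
- by apply: cancelZ; rewrite mulmxA -J2Z -mulmxA -J2Z mulmxA sqr2 mul1mx mulmx1.
- apply: cancelZ; rewrite mulmxN !mulmxA -J1Z -J2Z -!mulmxA -J1Z -J2Z !mulmxA.
  by rewrite anti mulNmx.
- exact: skew_adjoint_restrict sk1 J1Z.
- exact: skew_adjoint_restrict sk2 J2Z.
Qed.

Section Orbit.
Variables (m : nat) (G J1 J2 : 'M[R]_m).
Hypothesis adm : cl02_admissible G J1 J2.

Definition orbit_mx (u : 'cV[R]_m) : 'M[R]_(m, 4) :=
  \matrix_(i, k) (nth 0 [:: u; J1 *m u; J2 *m u; J1 *m (J2 *m u)] k) i 0.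

Lemma orbit_mxE u i k :
  orbit_mx u i k = (nth 0 [:: u; J1 *m u; J2 *m u; J1 *m (J2 *m u)] k) i 0.
Proof. by rewrite mxE. Qed.

Lemma col_orbit_mx u k :
  col k (orbit_mx u) = nth 0 [:: u; J1 *m u; J2 *m u; J1 *m (J2 *m u)] k.
Proof. by apply/colP => i; rewrite !mxE. Qed.

Let J1K (v : 'cV[R]_m) : J1 *m (J1 *m v) = v.
Proof. by rewrite mulmxA (cl02_sqr1 adm) mul1mx. Qed.
Let J2K (v : 'cV[R]_m) : J2 *m (J2 *m v) = v.
Proof. by rewrite mulmxA (cl02_sqr2 adm) mul1mx. Qed.
Let J21 (v : 'cV[R]_m) : J2 *m (J1 *m v) = - (J1 *m (J2 *m v)).
Proof. by rewrite !mulmxA (cl02_anti adm) mulNmx opprK. Qed.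

Lemma orbit_mx_e1 u : J1 *m orbit_mx u = orbit_mx u *m model_e1.
Proof.
apply/matrixP => i k; rewrite mulmx_col_entry col_orbit_mx [RHS]mxE.
rewrite !big_ord_recr big_ord0 /= !orbit_mxE !mx4E.
case: k => [[|[|[|[|?]]]] ?] //=; rewrite ?J1K ?J2K ?J21; ring.
Qed.

Lemma orbit_mx_e2 u : J2 *m orbit_mx u = orbit_mx u *m model_e2.
Proof.
apply/matrixP => i k; rewrite mulmx_col_entry col_orbit_mx [RHS]mxE.
rewrite !big_ord_recr big_ord0 /= !orbit_mxE !mx4E.
case: k => [[|[|[|[|?]]]] ?] //=; rewrite ?J1K ?J2K ?J21 ?mulmxN ?J2K ?mxE; ring.
Qed.
Lemma gram_orbit_mx u :
  (orbit_mx u)^T *m G *m orbit_mx u = bform G u u *: model_gram.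
Proof.
have [sG _ _ _ anti sk1 sk2] := adm.
have uJ1 := bform_skew_self u sG sk1.
have uJ2 := bform_skew_self u sG sk2.
have uJ12 : bform G u (J1 *m (J2 *m u)) = 0.
  by rewrite mulmxA; apply: bform_skew_self => //; apply: skew_adjointM.
move/skew_adjointP: sk1 => sk1; move/skew_adjointP: sk2 => sk2.
apply/matrixP => k l; rewrite -bform_col !col_orbit_mx mxE mx4E.
case: k => [[|[|[|[|?]]]] ?] //; case: l => [[|[|[|[|?]]]] ?] //=;
  rewrite ?(sk1, sk2, J21, J1K, J2K, mulmxN, bformNr, opprK) ?uJ1 ?uJ2 ?uJ12;
  ring.
Qed.

End Orbit.

Lemma cl02_decomposition m (G J1 J2 : 'M[R]_m) :
  cl02_admissible G J1 J2 ->
  exists X E1 E2 K Q : 'M[R]_m,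
    [/\ X \in unitmx, J1 *m X = X *m E1, J2 *m X = X *m E2,
        X^T *m G *m X = Q & integral_frame E1 E2 K Q].
Proof.
elim/ltn_ind: m G J1 J2 => m IH G J1 J2 adm.
have [m0 | m_gt0] := posnP m.
  subst m; exists 1%:M, 0, 0, 0, 0.
  by split; rewrite ?unitmx1 ?flatmx0 //; apply: integral_frame0.
have [sG uG _ _ _ sk1 sk2] := adm.
have [u pu] := exists_unit_vector m_gt0 sG uG.
set Y := orbit_mx J1 J2 u.
have YGY : Y^T *m G *m Y = bform G u u *: model_gram by apply: gram_orbit_mx.
have [r [Z [mr oYZ fX stable]]] :
    exists r (Z : 'M[R]_(m, r)), [/\ (4 + r)%N = m, Y^T *m G *m Z = 0,
      row_free (row_mx Y Z)^T & forall (J : 'M[R]_m) (j : 'M[R]_4),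
        skew_adjoint G J -> J *m Y = Y *m j -> exists J', J *m Z = Z *m J'].
  by apply: orthogonal_complement; rewrite // YGY unitmx_model_gramZ.
have [J1' J1Z] := stable _ _ sk1 (orbit_mx_e1 adm u).
have [J2' J2Z] := stable _ _ sk2 (orbit_mx_e2 adm u).
subst m; have uYZ : row_mx Y Z \in unitmx by rewrite -unitmx_tr -row_free_unit.
have [X' [E1' [E2' [K' [Q' [uX' J1X' J2X' GX' frame']]]]]] :=
  IH r (leq_addl 3 r) _ _ _ (cl02_admissible_complement adm oYZ uYZ J1Z J2Z).
exists (row_mx Y (Z *m X')), (diag_block_mx model_e1 E1'),
  (diag_block_mx model_e2 E2'), (diag_block_mx model_k K'),
  (diag_block_mx (bform G u u *: model_gram) Q'); split.
- rewrite -[Y]mulmx1 -mul_row_diag_block_mx unitmx_mul uYZ.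
  by rewrite unitmx_diag_block_mx unitmx1 uX'.
- by rewrite mul_row_diag_block_mx mul_mx_row (orbit_mx_e1 adm) mulmxA J1Z -!mulmxA J1X'.
- by rewrite mul_row_diag_block_mx mul_mx_row (orbit_mx_e2 adm) mulmxA J2Z -!mulmxA J2X'.
- rewrite gram_row_mx // ?mulmxA ?oYZ ?mul0mx // YGY -GX' trmx_mul.
  by rewrite !mulmxA.
- exact: integral_frame_diag_block (model_frame pu) frame'.
Qed.

Lemma cl02_complex_structure m (G J1 J2 : 'M[R]_m) :
  cl02_admissible G J1 J2 ->
  exists K C : 'M[R]_m,
    [/\ [/\ K *m J1 = - (J1 *m K), K *m J2 = - (J2 *m K), K *m K = - 1%:M,
            self_adjoint G K & C \in unitmx] &
        [/\ is_diag_mx (C^T *m G *m C), forall a, pm1 ((C^T *m G *m C) a a),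
            pm10_mx ((J1 *m C)^T *m G *m C), pm10_mx ((J2 *m C)^T *m G *m C)
          & pm10_mx ((K *m C)^T *m G *m C)]].
Proof.
move=> adm; have [X [E1 [E2 [E3 [Q [uX J1X J2X GX []]]]]]] := cl02_decomposition adm.
move=> anti1 anti2 sqrK sa dQ sQ int1 int2 intK.
have KX : X *m E3 *m invmx X *m X = X *m E3 by rewrite mulmxKV.
exists (X *m E3 *m invmx X), X; split; split; rewrite ?(gram_mulmx _ J1X)
  ?(gram_mulmx _ J2X) ?(gram_mulmx _ KX) ?GX //.
- exact: anti_conj uX KX J1X anti1.
- exact: anti_conj uX KX J2X anti2.
- exact: sqr_conj uX KX sqrK.
- by apply: self_adjoint_conj uX KX _; rewrite GX.
Qed.

End Cl02Decomposition.

Section Tensor.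
Variable R : realType.

Lemma tensmxDl m n p q (A B : 'M[R]_(m, n)) (C : 'M[R]_(p, q)) :
  (A + B) *t C = A *t C + B *t C.
Proof. by apply/matrixP => i j; rewrite !mxE mulrDl. Qed.

Lemma tensmxDr m n p q (A : 'M[R]_(m, n)) (B C : 'M[R]_(p, q)) :
  A *t (B + C) = A *t B + A *t C.
Proof. by apply/matrixP => i j; rewrite !mxE mulrDr. Qed.

Lemma tensmxZl m n p q (c : R) (A : 'M[R]_(m, n)) (C : 'M[R]_(p, q)) :
  (c *: A) *t C = c *: (A *t C).
Proof. by apply/matrixP => i j; rewrite !mxE mulrA. Qed.

Lemma tensmxZr m n p q (c : R) (A : 'M[R]_(m, n)) (C : 'M[R]_(p, q)) :
  A *t (c *: C) = c *: (A *t C).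
Proof. by apply/matrixP => i j; rewrite !mxE mulrCA. Qed.

Lemma tensmxNl m n p q (A : 'M[R]_(m, n)) (C : 'M[R]_(p, q)) :
  (- A) *t C = - (A *t C).
Proof. by apply/matrixP => i j; rewrite !mxE mulNr. Qed.

Lemma tensmxNr m n p q (A : 'M[R]_(m, n)) (C : 'M[R]_(p, q)) :
  A *t (- C) = - (A *t C).
Proof. by apply/matrixP => i j; rewrite !mxE mulrN. Qed.

Lemma tensmx11 m n : (1%:M : 'M[R]_m) *t (1%:M : 'M[R]_n) = 1%:M.
Proof.
apply/matrixP => i j.
case: (mxtens_indexP i) => i1 i2; case: (mxtens_indexP j) => j1 j2.
rewrite tensmxE !mxE (inj_eq (can_inj (@mxtens_indexK _ _))) xpair_eqE.
by case: (i1 == j1); case: (i2 == j2); rewrite /= ?mul1r ?mul0r.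
Qed.

(* Unlike [tensmx_unit], no nonzero-dimension side conditions. *)
Lemma tensmx_unitmx m n (A : 'M[R]_m) (B : 'M[R]_n) :
  A \in unitmx -> B \in unitmx -> A *t B \in unitmx.
Proof.
move=> uA uB; suff : (invmx A *t invmx B) *m (A *t B) = 1%:M by case/mulmx1_unit.
by rewrite tensmx_mul !mulVmx // tensmx11.
Qed.

Lemma gram_tensmx m n p q (A C : 'M[R]_(m, p)) (B D : 'M[R]_(n, q)) G H :
  (A *t B)^T *m (G *t H) *m (C *t D) = (A^T *m G *m C) *t (B^T *m H *m D).
Proof. by rewrite trmx_tens !tensmx_mul. Qed.

Lemma pm10_tensmx m n p q (A : 'M[R]_(m, n)) (B : 'M[R]_(p, q)) :
  pm10_mx A -> pm10_mx B -> pm10_mx (A *t B).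
Proof.
move=> hA hB a b; case: (mxtens_indexP a) => a1 a2; case: (mxtens_indexP b) => b1 b2.
by rewrite tensmxE; apply: pm10M.
Qed.

Lemma is_diag_tensmx m n (A : 'M[R]_m) (B : 'M[R]_n) :
  is_diag_mx A -> is_diag_mx B -> is_diag_mx (A *t B).
Proof.
move=> /is_diag_mxP dA /is_diag_mxP dB; apply/is_diag_mxP => a b.
case: (mxtens_indexP a) => a1 a2; case: (mxtens_indexP b) => b1 b2.
rewrite tensmxE val_eqE (inj_eq (can_inj (@mxtens_indexK _ _))) xpair_eqE.
have [<-|a1b1] := eqVneq a1 b1; last by rewrite dA ?mul0r.
have [<-|a2b2] := eqVneq a2 b2; last by rewrite dB ?mulr0.
by [].
Qed.

Lemma pm1_tensmx_diag m n (A : 'M[R]_m) (B : 'M[R]_n) :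
  (forall i, pm1 (A i i)) -> (forall i, pm1 (B i i)) -> forall i, pm1 ((A *t B) i i).
Proof. by move=> hA hB i; case: (mxtens_indexP i) => i1 i2; rewrite tensmxE; apply: pm1M. Qed.

End Tensor.

Section CliffordModule.
Variables (R : realType) (p q N : nat) (J : 'rV[R]_(p + q) -> 'M[R]_N).
Hypothesis clJ : clmodule J.

Lemma clmodule0 : J 0 = 0.
Proof.
have [lin _] := clJ; have := lin 1 0 0.
by rewrite !scale1r addr0 => /eqP; rewrite -subr_eq0 opprD addrA subrr add0r oppr_eq0 => /eqP.
Qed.

Lemma clmoduleD x y : J (x + y) = J x + J y.
Proof. by have [lin _] := clJ; rewrite -{1}[x]scale1r lin scale1r. Qed.

Lemma clmodule_sum_gen z : J z = \sum_k z 0 k *: J (gen R k).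
Proof.
have [lin _] := clJ.
rewrite {1}[z]row_sum_delta (big_morph J clmoduleD clmodule0).
by apply: eq_bigr => k _; rewrite /gen -[z 0 k *: delta_mx 0 k]addr0 lin clmodule0 addr0.
Qed.

Lemma anti_clmodule (K : 'M[R]_N) :
  (forall k, K *m J (gen R k) = - (J (gen R k) *m K)) ->
  forall z, K *m J z = - (J z *m K).
Proof.
move=> antiK z; rewrite clmodule_sum_gen mulmx_sumr mulmx_suml -sumrN.
by apply: eq_bigr => k _; rewrite -scalemxAr -scalemxAl antiK scalerN.
Qed.

Lemma qform_gen (k : 'I_(p + q)) : qform (gen R k) = if (k < p)%N then 1 else -1.
Proof.
rewrite /qform (bigD1 k) //= big1 ?addr0 => [|i ik]; rewrite /gen mxE eqxx /=.
  by rewrite eqxx expr1n mulr1.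
by rewrite (negbTE ik) expr0n mulr0.
Qed.

Lemma qform_genD (k l : 'I_(p + q)) : k != l ->
  qform (gen R k + gen R l) = qform (gen R k) + qform (gen R l).
Proof.
move=> kl; rewrite /qform -big_split; apply: eq_bigr => i _ /=.
rewrite !mxE /= -mulrDr; congr (_ * _); rewrite sqrrD -natrM mulnb.
have -> : (i == k) && (i == l) = false.
  by apply/andP => -[/eqP-> /eqP kl']; rewrite kl' eqxx in kl.
by rewrite mul0rn addr0.
Qed.

Lemma clmodule_gen_anti (k l : 'I_(p + q)) : k != l ->
  J (gen R k) *m J (gen R l) = - (J (gen R l) *m J (gen R k)).
Proof.
have [_ sqr] := clJ; move=> kl.
have := sqr (gen R k + gen R l); rewrite clmoduleD mulmxDl !mulmxDr !sqr qform_genD //.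
move=> /matrixP h; apply/matrixP => i j; move: (h i j); rewrite !mxE; lra.
Qed.

End CliffordModule.

Section Cl02Module.
Variables (R : realType) (M : nat) (J : 'rV[R]_(0 + 2) -> 'M[R]_M) (G : 'M[R]_M).
Hypothesis admJ : admissible J G.
Local Notation J1 := (J (gen R (ord0 : 'I_(0 + 2)))).
Local Notation J2 := (J (gen R (ord_max : 'I_(0 + 2)))).

Lemma cl02_gen_ind (P : 'I_(0 + 2) -> Prop) : P ord0 -> P ord_max -> forall k, P k.
Proof.
move=> P0 P1; case=> [[|[|//]] k].
- by rewrite (_ : Ordinal k = ord0) //; apply: val_inj.
- by rewrite (_ : Ordinal k = ord_max) //; apply: val_inj.
Qed.

Lemma cl02_admissible_gen : cl02_admissible G J1 J2.
Proof.
have [[lin sqr] [[sG uG] sk]] := admJ; split => //.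
- by rewrite sqr qform_gen opprK scale1r.
- by rewrite sqr qform_gen opprK scale1r.
- by apply: clmodule_gen_anti; case: admJ.
- by apply/skew_adjointP => u v; apply: sk.
- by apply/skew_adjointP => u v; apply: sk.
Qed.

Lemma cl02_anticommute (K : 'M[R]_M) :
  K *m J1 = - (J1 *m K) -> K *m J2 = - (J2 *m K) ->
  forall w, K *m J w = - (J w *m K).
Proof.
by move=> anti0 anti1; apply: anti_clmodule; [case: admJ | apply: cl02_gen_ind].
Qed.

End Cl02Module.

Section IntegralBasis.
Variables (R : realType) (p q N : nat) (J : 'rV[R]_(p + q) -> 'M[R]_N) (G : 'M[R]_N).

Lemma admissible_integralP :
  admissible_integral J G <->
  admissible J G /\
  exists B, [/\ B \in unitmx, is_diag_mx (B^T *m G *m B),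
                forall a, pm1 ((B^T *m G *m B) a a)
              & forall k, pm10_mx ((J (gen R k) *m B)^T *m G *m B)].
Proof.
split=> [[adm [B [uB [o [d i]]]]] | [adm [B [uB /is_diag_mxP o d i]]]];
  split=> //; exists B; split=> //.
- by apply/is_diag_mxP => a b ab; rewrite -bform_col o.
- by move=> a; rewrite -bform_col.
- by move=> k a b; rewrite -bform_col col_mulmx.
- split; first by move=> a b ab; rewrite bform_col o.
  split=> [a|k a b]; first by rewrite bform_col; apply: d.
  by rewrite -col_mulmx bform_col; apply: i.
Qed.

End IntegralBasis.

Section TensorRepresentation.
Variables (R : realType) (n m N M : nat).
Variables (JV : 'rV[R]_(n + 0) -> 'M[R]_N) (JU : 'rV[R]_(0 + m) -> 'M[R]_M).
Variable K : 'M[R]_M.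
Implicit Types z w : 'rV[R]_(0 + (n + m)).

Definition vpart z : 'rV[R]_(n + 0) := \row_i z 0 (lshift m (cast_ord (addn0 n) i)).
Definition upart z : 'rV[R]_(0 + m) := \row_j z 0 (rshift n j).

Lemma vpart_lin a z w : vpart (a *: z + w) = a *: vpart z + vpart w.
Proof. by apply/matrixP => i j; rewrite !mxE. Qed.

Lemma upart_lin a z w : upart (a *: z + w) = a *: upart z + upart w.
Proof. by apply/matrixP => i j; rewrite !mxE. Qed.

Lemma qform_split z : qform z = qform (upart z) - qform (vpart z).
Proof.
have -> : qform z = \sum_(i < n + m) - z 0 i ^+ 2.
  by apply: eq_bigr => i _; rewrite mulN1r.
rewrite big_split_ord /= addrC /qform; congr (_ + _).
  by apply: eq_bigr => j _; rewrite /upart mxE mulN1r.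
rewrite (reindex (cast_ord (esym (addn0 n)))) /=; last first.
  by exists (cast_ord (addn0 n)) => i _; rewrite ?cast_ordK ?cast_ordKV.
rewrite -sumrN; apply: eq_bigr => j _.
by rewrite /= ltn_ord /vpart mxE cast_ordKV mul1r.
Qed.

Lemma vpart_gen_l (k : 'I_n) :
  vpart (gen R (lshift m k)) = gen R (cast_ord (esym (addn0 n)) k).
Proof.
apply/matrixP => i j; rewrite !mxE -!val_eqE /= [i]ord1 /=.
by congr (_ %:R); apply/eqP/eqP => [->|<-].
Qed.

Lemma upart_gen_l (k : 'I_n) : upart (gen R (lshift m k)) = 0.
Proof.
apply/matrixP => i j; rewrite !mxE /= -val_eqE /=.
by rewrite gtn_eqF // (leq_trans (ltn_ord k)) ?leq_addr.
Qed.

Lemma vpart_gen_r (k : 'I_m) : vpart (gen R (rshift n k)) = 0.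
Proof.
apply/matrixP => i j; rewrite !mxE /= -val_eqE /=.
by rewrite ltn_eqF // (leq_trans (ltn_ord j)) // addn0 leq_addr.
Qed.

Lemma upart_gen_r (k : 'I_m) : upart (gen R (rshift n k)) = gen R (k : 'I_(0 + m)).
Proof. by apply/matrixP => i j; rewrite !mxE -!val_eqE [i]ord1 /= eqn_add2l. Qed.

Definition tensor_rep z : 'M[R]_(N * M) := JV (vpart z) *t K + 1%:M *t JU (upart z).

Variables (GV : 'M[R]_N) (GU : 'M[R]_M).
Hypotheses (admV : admissible JV GV) (admU : admissible JU GU).
Hypotheses (antiK : forall y, K *m JU y = - (JU y *m K)) (sqrK : K *m K = - 1%:M).
Hypothesis saK : self_adjoint GU K.
Local Notation J := tensor_rep.

Lemma tensor_rep_clmodule : clmodule J.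
Proof.
have [[linV sqrV] _] := admV; have [[linU sqrU] _] := admU.
split=> [a z w | z].
  rewrite /tensor_rep vpart_lin upart_lin linV linU tensmxDl tensmxZl tensmxDr.
  by rewrite tensmxZr scalerDr addrACA.
rewrite /tensor_rep mulmxDl !mulmxDr !tensmx_mul !mulmx1 !mul1mx antiK sqrV sqrU sqrK.
rewrite tensmxNr addrA tensmxNr subrK tensmxZl tensmxZr tensmx11 (qform_split z).
by rewrite -scaleNr -scalerDl; congr (_ *: _); ring.
Qed.

Lemma tensor_rep_skew z : skew_adjoint (GV *t GU) (J z).
Proof.
have [_ [_ skV]] := admV; have [_ [_ skU]] := admU.
have /skew_adjointP sV := skV (vpart z); have /skew_adjointP sU := skU (upart z).
rewrite /skew_adjoint /tensor_rep linearD /= !trmx_tens trmx1 mulmxDl !tensmx_mul.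
by rewrite mul1mx sV sU saK mulmxDr !tensmx_mul mulmx1 tensmxNl tensmxNr opprD.
Qed.

Lemma tensor_rep_admissible : admissible J (GV *t GU).
Proof.
have [_ [[sGV uGV] _]] := admV; have [_ [[sGU uGU] _]] := admU.
split; first exact: tensor_rep_clmodule.
split; first by split; [rewrite trmx_tens sGV sGU | apply: tensmx_unitmx].
by move=> z; apply/skew_adjointP/tensor_rep_skew.
Qed.

Lemma tensor_rep_gen_l (k : 'I_n) :
  J (gen R (lshift m k)) = JV (gen R (cast_ord (esym (addn0 n)) k)) *t K.
Proof.
by rewrite /tensor_rep vpart_gen_l upart_gen_l clmodule0 ?tensmx0 ?addr0 //; case: admU.
Qed.

Lemma tensor_rep_gen_r (k : 'I_m) :
  J (gen R (rshift n k)) = 1%:M *t JU (gen R (k : 'I_(0 + m))).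
Proof.
by rewrite /tensor_rep vpart_gen_r upart_gen_r clmodule0 ?tens0mx ?add0r //; case: admV.
Qed.

Lemma tensor_rep_integral (BV : 'M[R]_N) (C : 'M[R]_M) :
  is_diag_mx (BV^T *m GV *m BV) -> (forall a, pm1 ((BV^T *m GV *m BV) a a)) ->
  (forall k, pm10_mx ((JV (gen R k) *m BV)^T *m GV *m BV)) ->
  is_diag_mx (C^T *m GU *m C) -> (forall a, pm1 ((C^T *m GU *m C) a a)) ->
  (forall k, pm10_mx ((JU (gen R k) *m C)^T *m GU *m C)) ->
  pm10_mx ((K *m C)^T *m GU *m C) ->
  forall k, pm10_mx ((J (gen R k) *m (BV *t C))^T *m (GV *t GU) *m (BV *t C)).
Proof.
move=> dV sV intV dU sU intU intK k.
rewrite -[k](splitK (k : 'I_(n + m))); case: (split _) => k' /=.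
  by rewrite tensor_rep_gen_l tensmx_mul gram_tensmx; apply: pm10_tensmx.
rewrite tensor_rep_gen_r tensmx_mul mul1mx gram_tensmx.
by apply: pm10_tensmx => //; apply: pm10_mx_diag.
Qed.

End TensorRepresentation.

Theorem theorem7p5 (R : realType) (n N M : nat)
  (JV : 'rV[R]_(n + 0) -> 'M[R]_N) (GV : 'M[R]_N)
  (JU : 'rV[R]_(0 + 2) -> 'M[R]_M) (GU : 'M[R]_M) :
  admissible_integral JV GV -> pos_definite GV ->
  admissible_integral JU GU ->
  exists J : 'rV[R]_(0 + (n + 2)) -> 'M[R]_(N * M),
    admissible_integral J (tensmx GV GU).
Proof.
move=> /admissible_integralP [admV [BV [uBV dV sV intV]]] _ [admU _].
have [K [C [[anti1 anti2 sqrK saK uC] [dU sU int1 int2 intK]]]] :=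
  cl02_complex_structure (cl02_admissible_gen admU).
have antiK := cl02_anticommute admU anti1 anti2.
exists (tensor_rep JV JU K); apply/admissible_integralP; split.
  exact: tensor_rep_admissible.
exists (BV *t C); split.
- exact: tensmx_unitmx.
- by rewrite gram_tensmx; apply: is_diag_tensmx.
- by rewrite gram_tensmx; apply: pm1_tensmx_diag.
- by apply: tensor_rep_integral => //; apply: cl02_gen_ind.
Qed.
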